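(* Suppose $p>1-1/e^2$ and fix $\epsilon'>0$. Then there is a constant $c_1=c_1(\epsilon')>0$ (independent of $n$) such that for every $n$ with $x_0(n)>\epsilon'$ we have $\varphi_n(x_0(n)-\epsilon')\ge c_1$.
   Context: Let $p\in(0,1)$ be constant, $q=1-p$, $b=1/q$, $\gamma=\gamma(n)=2\log_b n-2\log_b\log_b n-2\log_b 2$, $\Delta=\gamma-\lfloor\gamma\rfloor\in[0,1)$. Define $\varphi_n(x)=(1-\Delta+x)\log_b(1-\Delta+x)+(1-\Delta)(\Delta-x)/2$, and let $x_0=x_0(n)$ be the smallest nonnegative $x$ with $\varphi_n(x)\le0$ (well defined since $\varphi_n(\Delta)=0$, and $x_0\in[0,\Delta]$). *)

From Stdlib Require Import Reals.
Open Scope R_scope.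

Definition base (p : R) : R := / (1 - p).

Definition logb (p x : R) : R := ln x / ln (base p).

Definition gamma (p : R) (n : nat) : R :=
  2 * logb p (INR n) - 2 * logb p (logb p (INR n)) - 2 * logb p 2.

(* floor via Int_part (Int_part r = up r - 1 = floor r) *)
Definition Delta (p : R) (n : nat) : R :=
  gamma p n - IZR (Int_part (gamma p n)).

Definition phi (p : R) (n : nat) (x : R) : R :=
  let D := Delta p n in
  (1 - D + x) * logb p (1 - D + x) + (1 - D) * (D - x) / 2.

Definition is_x0 (p : R) (n : nat) (x : R) : Prop :=
  0 <= x /\ phi p n x <= 0 /\
  (forall y, 0 <= y -> phi p n y <= 0 -> x <= y).

(** The map [u |-> u ln u] has second derivative [1/u >= 1] on [(0, 1]], so it is
    strongly midpoint convex there with modulus [1/4], while [phi_n] is this map at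
    [1 - Delta + x], divided by [ln b > 0], plus an affine function of [x].  Since
    [phi_n (x0) <= 0 < phi_n (x0 - eps/2)] by minimality of [x0], the convexity gap at
    the three points [x0 - eps], [x0 - eps/2], [x0] forces
    [phi_n (x0 - eps) >= eps^2 / (4 ln b)], a bound independent of [n]. *)

From Stdlib Require Import Reals Lra.
From Coquelicot Require Import Coquelicot.
Open Scope R_scope.

Lemma ln_le_sub1 (y : R) : 0 < y -> ln y <= y - 1.
Proof.
  intros Hy. pose proof (exp_ineq1_le (ln y)) as Hexp.
  rewrite exp_ln in Hexp; lra.
Qed.

Lemma ln_ge_1_sub_inv (y : R) : 0 < y -> 1 - / y <= ln y.
Proof.
  intros Hy. pose proof (ln_le_sub1 (/ y) (Rinv_0_lt_compat y Hy)) as Hinv.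
  rewrite ln_Rinv in Hinv; lra.
Qed.

Definition xlnx (u : R) : R := u * ln u.

Lemma xlnx_midpoint_gap (a c : R) : 0 < a -> a <= c -> c <= 1 ->
  (c - a) ^ 2 / 4 <= xlnx a + xlnx c - 2 * xlnx ((a + c) / 2).
Proof.
  intros Ha Hac Hc1.
  set (G := fun x => xlnx x - 2 * xlnx ((a + x) / 2) - (x - a) ^ 2 / 4).
  set (dG := fun x => ln x - ln ((a + x) / 2) - (x - a) / 2).
  assert (HG : forall x, a <= x -> is_derive G x (dG x)).
  { intros x Hx. unfold G, dG, xlnx. auto_derive.
    - repeat split; lra.
    - unfold Rdiv; field; lra. }
  (* [ln (x/m) >= 1 - m/x = (x - m)/x >= x - m] since [x <= 1], with [m] the midpoint. *)
  assert (HdG : forall x, a <= x <= 1 -> 0 <= dG x).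
  { intros x Hx. unfold dG.
    set (m := (a + x) / 2).
    pose proof (ln_ge_1_sub_inv (x / m) ltac:(unfold m; apply Rdiv_lt_0_compat; lra)) as Hln.
    rewrite ln_div in Hln by (unfold m; lra).
    assert (Hfrac : 1 - / (x / m) = (x - m) / x) by (unfold m; field; lra).
    assert (Hxm : x - m <= (x - m) / x).
    { apply Rmult_le_reg_r with x; [lra|].
      unfold Rdiv. rewrite Rmult_assoc, Rinv_l by lra. unfold m. nra. }
    unfold m in *. lra. }
  destruct (MVT_gen G a c dG) as [z [Hz Hmvt]].
  - intros x Hx. apply HG. rewrite Rmin_left in Hx; lra.
  - intros x Hx. apply continuity_pt_filterlim.
    apply (ex_derive_continuous (K := R_AbsRing) (V := R_NormedModule)).
    eexists. apply HG. rewrite Rmin_left in Hx; lra.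
  - rewrite Rmin_left, Rmax_right in Hz by lra.
    assert (HGa : G a = - xlnx a).
    { unfold G. replace ((a + a) / 2) with a by field.
      replace (a - a) with 0 by lra. simpl. lra. }
    assert (HGac : G a <= G c).
    { pose proof (HdG z ltac:(lra)). nra. }
    unfold G in HGa, HGac. lra.
Qed.

Lemma ln_base_pos (p : R) : 0 < p < 1 -> 0 < ln (base p).
Proof.
  intros Hp. rewrite <- ln_1. apply ln_increasing; [lra|].
  unfold base. rewrite <- Rinv_1. apply Rinv_lt_contravar; lra.
Qed.

Lemma Delta_bounds (p : R) (n : nat) : 0 <= Delta p n < 1.
Proof. unfold Delta. pose proof (base_Int_part (gamma p n)). lra. Qed.

Lemma phi_xlnx (p : R) (n : nat) (x : R) :
  phi p n x = xlnx (1 - Delta p n + x) / ln (base p)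
              + (1 - Delta p n) * (Delta p n - x) / 2.
Proof. unfold phi, logb, xlnx, Rdiv. ring. Qed.

Lemma phi_Delta (p : R) (n : nat) : phi p n (Delta p n) = 0.
Proof.
  rewrite phi_xlnx. replace (1 - Delta p n + Delta p n) with 1 by ring.
  unfold xlnx, Rdiv. rewrite ln_1. ring.
Qed.

Lemma x0_le_Delta (p : R) (n : nat) (x0 : R) : is_x0 p n x0 -> x0 <= Delta p n.
Proof.
  intros [_ [_ Hmin]]. apply Hmin.
  - apply Delta_bounds.
  - rewrite phi_Delta. lra.
Qed.

Lemma phi_pos_below_x0 (p : R) (n : nat) (x0 y : R) :
  is_x0 p n x0 -> 0 <= y < x0 -> 0 < phi p n y.
Proof.
  intros [_ [_ Hmin]] Hy.
  destruct (Rlt_or_le 0 (phi p n y)) as [Hpos | Hnpos]; [exact Hpos|].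
  pose proof (Hmin y (proj1 Hy) Hnpos). lra.
Qed.

(* The affine part of [phi] drops out of the second difference. *)
Lemma phi_midpoint_gap (p : R) (n : nat) (x e : R) : 0 < p < 1 ->
  0 < 1 - Delta p n + (x - e) -> 0 <= e -> x <= Delta p n ->
  e ^ 2 / (4 * ln (base p)) <= phi p n (x - e) + phi p n x - 2 * phi p n (x - e / 2).
Proof.
  intros Hp Hpos He HxD.
  pose proof (ln_base_pos p Hp) as HL.
  pose proof (xlnx_midpoint_gap (1 - Delta p n + (x - e)) (1 - Delta p n + x)
                Hpos ltac:(lra) ltac:(lra)) as Hgap.
  replace ((1 - Delta p n + (x - e) + (1 - Delta p n + x)) / 2)
    with (1 - Delta p n + (x - e / 2)) in Hgap by field.
  replace (1 - Delta p n + x - (1 - Delta p n + (x - e))) with e in Hgap by ring.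
  rewrite !phi_xlnx.
  set (L := ln (base p)) in *.
  apply Rmult_le_reg_r with L; [exact HL|].
  replace (e ^ 2 / (4 * L) * L) with (e ^ 2 / 4) by (field; lra).
  match goal with |- _ <= ?rhs => replace rhs with
    (xlnx (1 - Delta p n + (x - e)) + xlnx (1 - Delta p n + x)
     - 2 * xlnx (1 - Delta p n + (x - e / 2))) by (field; lra) end.
  exact Hgap.
Qed.

Theorem lemma5 (p : R) (hp0 : 0 < p) (hp1 : p < 1)
  (hp : p > 1 - / exp 2) (eps : R) (heps : eps > 0) :
  exists c1 : R, c1 > 0 /\
    forall (n : nat) (x0 : R), (2 <= n)%nat -> is_x0 p n x0 -> x0 > eps ->
      phi p n (x0 - eps) >= c1.
Proof.
  pose proof (ln_base_pos p (conj hp0 hp1)) as HL.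
  exists (eps ^ 2 / (4 * ln (base p))). split.
  { apply Rlt_gt, Rdiv_lt_0_compat; nra. }
  intros n x0 _ Hx0 Hgt.
  pose proof (Delta_bounds p n) as HD.
  pose proof (x0_le_Delta p n x0 Hx0) as HxD.
  pose proof (phi_pos_below_x0 p n x0 (x0 - eps / 2) Hx0 ltac:(lra)) as Hmid.
  pose proof (proj1 (proj2 Hx0)) as Hphi0.
  pose proof (phi_midpoint_gap p n x0 eps (conj hp0 hp1) ltac:(lra) ltac:(lra) HxD).
  lra.
Qed.
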